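(* Let $u,w\in\mathbb{D}$ and let $B(z)=\left(\frac{z-w}{1-\overline{w}z}\right)\left(\frac{z-u}{1-\overline{u}z}\right)$. Then the unique critical point $c$ of $B$ in $\mathbb{D}$ lies at the midpoint of the hyperbolic geodesic between $u$ and $w$. Further, there are sets $D_1,D_2\subset\mathbb{D}$ such that $D_1\cup D_2=\mathbb{D}$, $D_1\cap D_2=\{c\}$ and $B$ is a one-to-one map from $D_j$ onto $\mathbb{D}$ for $j=1,2$.
   Context: $\mathbb{D}$ denotes the open unit disk, equipped with its hyperbolic metric. *)

From HB Require Import structures.
From mathcomp Require Import all_boot all_order all_algebra.
From mathcomp Require Import all_classical all_reals all_analysis.
From mathcomp Require Import complex.
Set Implicit Arguments. Unset Strict Implicit. Unset Printing Implicit Defensive.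
Import Order.TTheory GRing.Theory Num.Theory.
Import numFieldNormedType.Exports.
Local Open Scope classical_set_scope.
Local Open Scope ring_scope.
Local Open Scope complex_scope.

Definition cabs (R : realType) (z : R[i]) : R := Normc.normc z.

Definition unit_disk (R : realType) : set R[i] := [set z | cabs z < 1].
Arguments unit_disk R : clear implicits.

Definition pseudo_hyp (R : realType) (z w : R[i]) : R :=
  cabs ((z - w) / (1 - w^* * z)).

(* hyperbolic (Poincare) distance on the disk: 2 artanh(rho) = ln((1+rho)/(1-rho)) *)
Definition hdist (R : realType) (z w : R[i]) : R :=
  ln ((1 + pseudo_hyp z w) / (1 - pseudo_hyp z w)).

(* m is the midpoint of the hyperbolic geodesic segment from u to w:
   m lies on the geodesic (equality in the triangle inequality) and is
   equidistant from both endpoints. *)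
Definition hyp_midpoint (R : realType) (u w m : R[i]) : Prop :=
  m \in unit_disk R /\ hdist u m = hdist m w /\ hdist u m + hdist m w = hdist u w.

Definition blaschke_factor (R : realType) (a z : R[i]) : R[i] :=
  (z - a) / (1 - a^* * z).

(* complex derivative and complex differentiability, via MathComp-Analysis's
   derive1/derivable on the normed module R[i]^o over the field R[i]
   (R[i]^o is definitionally R[i]). *)
Definition cderive (R : realType) (f : R[i] -> R[i]) (z : R[i]) : R[i] :=
  derive1 (f : R[i]^o -> R[i]^o) z.
Definition cderivable (R : realType) (f : R[i] -> R[i]) (z : R[i]) : Prop :=
  derivable (f : R[i]^o -> R[i]^o) z 1.

(* Let c be the point of the disk for which the automorphism
   phi_c(z) = (z - c) / (1 - conj(c) z) sends u and w to opposite points s and -s.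
   Recentring a Blaschke factor at c only multiplies it by a unimodular
   constant, so B = mu * phi_(s^2) o (fun t => t^2) o phi_c with |mu| = 1.
   Hence c is the only critical point of B in the disk, B is two-to-one exactly
   like t |-> t^2, and the two sheets D_1, D_2 are the pull-backs by phi_c of
   the two branches of the square root. Since phi_c is a hyperbolic isometry,
   u and w lie at pseudo-hyperbolic distance |s| from c, and at distance
   2|s| / (1 + |s|^2) from each other, which is the doubling formula for the
   hyperbolic distance: c is the hyperbolic midpoint. *)
From HB Require Import structures.
From mathcomp Require Import all_boot all_order all_algebra.
From mathcomp Require Import all_classical all_reals all_analysis.
From mathcomp Require Import complex.
From mathcomp Require Import ring lra.
Import Order.TTheory GRing.Theory Num.Theory.
Import numFieldNormedType.Exports.
Set Implicit Arguments. Unset Strict Implicit. Unset Printing Implicit Defensive.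
Local Open Scope classical_set_scope.
Local Open Scope complex_scope.
Local Open Scope ring_scope.

Section MobiusAlgebra.
Variable F : fieldType.
Implicit Types a c s t u w x y z K : F.

(* The second parameter [a'] stands for the complex conjugate of [a]. *)
Definition mobius a a' z := (z - a) / (1 - a' * z).

Lemma mobiusB a a' x y : 1 - a' * x != 0 -> 1 - a' * y != 0 ->
  mobius a a' x - mobius a a' y =
  (x - y) * (1 - a' * a) / ((1 - a' * x) * (1 - a' * y)).
Proof. by move=> hx hy; rewrite /mobius; field; rewrite hx hy. Qed.

Lemma mobius_recenter c c' a a' z :
  1 - c' * z != 0 -> 1 - c' * a != 0 -> 1 - c * a' != 0 -> 1 - c * c' != 0 ->
  1 - a' * z != 0 ->
  mobius a a' z = (1 - c' * a) / (1 - c * a') *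
                  mobius (mobius c c' a) (mobius c' c a') (mobius c c' z).
Proof.
move=> h1 h2 h3 h4 h5; rewrite /mobius.
have -> : 1 - (a' - c') / (1 - c * a') * ((z - c) / (1 - c' * z)) =
          (1 - c * c') * (1 - a' * z) / ((1 - c * a') * (1 - c' * z)).
  by field; rewrite h1 h3.
by field; rewrite h1 h2 h3 h4 h5.
Qed.

Lemma mobiusK c c' t : 1 - - c' * t != 0 -> 1 - c' * c != 0 ->
  mobius c c' (mobius (- c) (- c') t) = t.
Proof.
move=> h1 h2; rewrite /mobius.
have -> : 1 - c' * ((t - - c) / (1 - - c' * t)) = (1 - c' * c) / (1 - - c' * t).
  by field.
by field; rewrite h1 h2.
Qed.

Lemma mobiusN_mul s s' t : 1 - s' * t != 0 -> 1 - - s' * t != 0 ->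
  mobius (- s) (- s') t * mobius s s' t = mobius (s ^+ 2) (s' ^+ 2) (t ^+ 2).
Proof.
move=> h1 h2; rewrite /mobius.
have -> : 1 - s' ^+ 2 * t ^+ 2 = (1 - s' * t) * (1 - - s' * t) by ring.
by field; rewrite h1 h2.
Qed.

Lemma mobiusN_self s s' : 1 - - s' * s != 0 ->
  mobius (- s) (- s') s = 2 * s / (1 + s' * s).
Proof.
move=> h; rewrite /mobius.
have -> : 1 + s' * s = 1 - - s' * s by ring.
by field.
Qed.

Definition crit_poly u u' w w' z :=
  (1 - w' * w) * (z - u) * (1 - u' * z) + (1 - u' * u) * (z - w) * (1 - w' * z).

Lemma mobius_product_rule u u' w w' z : 1 - w' * z != 0 -> 1 - u' * z != 0 ->
  mobius w w' z * ((1 - u' * u) / (1 - u' * z) ^+ 2) +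
  mobius u u' z * ((1 - w' * w) / (1 - w' * z) ^+ 2) =
  crit_poly u u' w w' z / ((1 - w' * z) ^+ 2 * (1 - u' * z) ^+ 2).
Proof. by move=> h1 h2; rewrite /mobius /crit_poly; field; rewrite h1 h2. Qed.

(* For [c = - mid_gamma * K], both the vanishing of [crit_poly] at [c] and the
   condition [mobius c c' w = - mobius c c' u] reduce to [mid_quadratic K = 0]. *)
Definition mid_gamma u u' w w' := - (u + w) + u * w * (u' + w').

Definition mid_quadratic u u' w w' K :=
  mid_gamma u u' w w' * mid_gamma u' u w' w * K ^+ 2
  - 2 * (1 - u * u' * w * w') * K + 1.

Lemma mid_quadratic_opp u u' w w' K :
  let c := - mid_gamma u u' w w' * K in let c' := - mid_gamma u' u w' w * K in
  (w - c) * (1 - c' * u) + (u - c) * (1 - c' * w) = (u + w) * mid_quadratic u u' w w' K.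
Proof. by rewrite /mid_quadratic /mid_gamma /=; ring. Qed.

Lemma mid_quadratic_crit u u' w w' K z :
  let c := - mid_gamma u u' w w' * K in let c' := - mid_gamma u' u w' w * K in
  (z - c) * (1 - c' * z) - K * crit_poly u u' w w' z = z * mid_quadratic u u' w w' K.
Proof. by rewrite /mid_quadratic /mid_gamma /crit_poly /=; ring. Qed.

End MobiusAlgebra.

Lemma ln_ratio_double (R : realType) (r : R) : 0 <= r -> r < 1 ->
  ln ((1 + r) / (1 - r)) + ln ((1 + r) / (1 - r)) =
  ln ((1 + 2 * r / (1 + r ^+ 2)) / (1 - 2 * r / (1 + r ^+ 2))).
Proof.
move=> r0 r1.
have n1 : 1 + r ^+ 2 != 0 by rewrite gt_eqF // ltr_pwDl // sqr_ge0.
have n2 : 1 - r != 0 by rewrite subr_eq0 eq_sym lt_eqF.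
have p : 0 < (1 + r) / (1 - r) by rewrite divr_gt0 // ?subr_gt0 //; lra.
rewrite -lnM ?posrE //.
have -> : 1 - 2 * r / (1 + r ^+ 2) = (1 - r) ^+ 2 / (1 + r ^+ 2) by field.
have -> : 1 + 2 * r / (1 + r ^+ 2) = (1 + r) ^+ 2 / (1 + r ^+ 2) by field.
by congr ln; field; rewrite n1 n2.
Qed.

Section DiskGeometry.
Variable R : realType.
Local Notation C := R[i].
Local Notation bf := blaschke_factor.
Implicit Types a s t x y z : C.

Lemma real_complexB (x y : R) : (x - y)%:C = x%:C - y%:C :> C.
Proof. exact: rmorphB. Qed.
Lemma real_complexD (x y : R) : (x + y)%:C = x%:C + y%:C :> C.
Proof. exact: rmorphD. Qed.
Lemma real_complexM (x y : R) : (x * y)%:C = x%:C * y%:C :> C.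
Proof. exact: rmorphM. Qed.
Lemma real_complexX (x : R) n : (x ^+ n)%:C = x%:C ^+ n :> C.
Proof. exact: rmorphXn. Qed.
Lemma real_complex_nat n : (n%:R : R)%:C = n%:R :> C.
Proof. exact: rmorph_nat. Qed.

Lemma conjCB x y : (x - y)^* = x^* - y^*.
Proof. exact: rmorphB. Qed.
Lemma conjCD x y : (x + y)^* = x^* + y^*.
Proof. exact: rmorphD. Qed.
Lemma conjCM x y : (x * y)^* = x^* * y^*.
Proof. exact: rmorphM. Qed.
Lemma conjCN x : (- x)^* = - x^*.
Proof. exact: rmorphN. Qed.
Lemma conjCX x n : (x ^+ n)^* = x^* ^+ n.
Proof. exact: rmorphXn. Qed.
Lemma conjCV x : (x^-1)^* = x^*^-1.
Proof. exact: fmorphV. Qed.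

Lemma cabs_sqr z : (cabs z ^+ 2)%:C = z * z^*.
Proof.
case: z => a b; rewrite /cabs /= sqr_sqrtr ?addr_ge0 ?sqr_ge0 //.
rewrite -[(Complex a b)^*]/(Complex a (- b)).
by apply/eqP; rewrite eq_complex /=; apply/andP; split; apply/eqP; ring.
Qed.

Lemma cabs_ge0 z : 0 <= cabs z.
Proof. by case: z => a b; rewrite /cabs /= sqrtr_ge0. Qed.

Lemma cabs_gt0 z : z != 0 -> 0 < cabs z.
Proof.
move=> hz; rewrite lt_def cabs_ge0 andbT.
by apply/eqP => /Normc.eq0_normc; apply/eqP.
Qed.

Lemma cabsJ z : cabs z^* = cabs z.
Proof. by case: z => a b; rewrite /cabs /= sqrrN. Qed.

Lemma cabsN z : cabs (- z) = cabs z.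
Proof. by case: z => a b; rewrite /cabs /= !sqrrN. Qed.

Lemma cabsM x y : cabs (x * y) = cabs x * cabs y.
Proof. exact: Normc.normcM. Qed.

Lemma cabsV x : cabs x^-1 = (cabs x)^-1.
Proof. exact: Normc.normcV. Qed.

Lemma cabs_real (r : R) : 0 <= r -> cabs r%:C = r.
Proof. by move=> h; rewrite /cabs /= expr0n /= addr0 sqrtr_sqr ger0_norm. Qed.

Lemma cabs_divJ x : x != 0 -> cabs (x / x^*) = 1.
Proof. by move=> hx; rewrite cabsM cabsV cabsJ divff // gt_eqF // cabs_gt0. Qed.

Lemma cabsM_lt1 x y : cabs x < 1 -> cabs y < 1 -> cabs (x * y) < 1.
Proof. by move=> hx hy; rewrite cabsM; have := cabs_ge0 x; have := cabs_ge0 y; nra. Qed.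

Lemma cabs_sqr_lt1 x : (cabs (x ^+ 2) < 1) = (cabs x < 1).
Proof. by rewrite expr2 cabsM -expr2 expr_lt1 ?cabs_ge0. Qed.

Lemma disk_denom_neq0 a z : cabs a < 1 -> cabs z < 1 -> 1 - a^* * z != 0.
Proof.
move=> ha hz; apply/eqP => /eqP; rewrite subr_eq0 => /eqP h.
have : cabs (a^* * z) = 1 by rewrite -h /cabs /= expr0n /= addr0 expr1n sqrtr1.
by rewrite cabsM cabsJ; have := cabs_ge0 a; have := cabs_ge0 z; nra.
Qed.

Lemma blaschke_factorE a z : bf a z = mobius a a^* z.
Proof. by []. Qed.

Lemma blaschke_factorJ a z : (bf a z)^* = mobius a^* a z^*.
Proof. by rewrite /blaschke_factor /mobius !(conjCM, conjCB, conjC1, conjCV, conjCK). Qed.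

Lemma cabs_blaschke_lt1 a z : cabs a < 1 -> cabs z < 1 -> cabs (bf a z) < 1.
Proof.
move=> ha hz; have hn := disk_denom_neq0 ha hz.
have E : cabs (1 - a^* * z) ^+ 2 - cabs (z - a) ^+ 2 =
         (1 - cabs a ^+ 2) * (1 - cabs z ^+ 2).
  apply: complexI; rewrite !real_complexB !cabs_sqr real_complexM !real_complexB.
  by rewrite !cabs_sqr !(conjCM, conjCB, conjC1, conjCK); ring.
have := cabs_ge0 a; have := cabs_ge0 z; have := cabs_ge0 (z - a) => n0 z0 a0.
have : 0 < (1 - cabs a ^+ 2) * (1 - cabs z ^+ 2) by apply: mulr_gt0; nra.
rewrite -E /blaschke_factor cabsM cabsV ltr_pdivrMr ?cabs_gt0 // mul1r => h.
by have := cabs_ge0 (1 - a^* * z); nra.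
Qed.

Lemma blaschke_factor_inj a x y : cabs a < 1 -> cabs x < 1 -> cabs y < 1 ->
  bf a x = bf a y -> x = y.
Proof.
move=> ha hx hy e; have n1 := disk_denom_neq0 ha hx; have n2 := disk_denom_neq0 ha hy.
have := mobiusB a n1 n2; rewrite -!blaschke_factorE e subrr => /esym/eqP.
rewrite !mulf_eq0 invr_eq0 !mulf_eq0 (negbTE n1) (negbTE n2) subr_eq0.
by rewrite (negbTE (disk_denom_neq0 ha ha)) !orbF => /eqP.
Qed.

Lemma blaschke_factorK a t : cabs a < 1 -> cabs t < 1 -> bf a (bf (- a) t) = t.
Proof.
move=> ha ht; rewrite !blaschke_factorE conjCN mobiusK //.
  by rewrite -conjCN disk_denom_neq0 ?cabsN.
exact: disk_denom_neq0.
Qed.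

Lemma cabs_blaschke_sym a z : cabs (bf a z) = cabs (bf z a).
Proof.
rewrite /blaschke_factor !cabsM !cabsV -opprB cabsN; congr (_ * _ ^-1).
by rewrite -[in RHS]cabsJ !(conjCM, conjCB, conjC1, conjCK) mulrC.
Qed.

Lemma is_derive_blaschke_factor a z : 1 - a^* * z != 0 ->
  is_derive (z : C^o) (1 : C^o) (bf a : C^o -> C^o) ((1 - a^* * a) / (1 - a^* * z) ^+ 2).
Proof.
move=> nz.
have -> : (bf a : C^o -> C^o) =
          (fun x : C^o => x - a) * (fun x : C^o => (1 - a^* * x)^-1) by [].
have h1 : is_derive (z : C^o) (1 : C^o) (fun x : C^o => x - a) 1.
  have := @is_deriveB C C^o C^o id (cst (a : C^o)) z 1 1 0
    (is_derive_id _ _) (is_derive_cst _ _ _).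
  by rewrite subr0.
have h2 : is_derive (z : C^o) (1 : C^o) (fun x : C^o => 1 - a^* * x) (- a^*).
  have hz := @is_deriveZ C C^o C^o id a^* z 1 1 (is_derive_id _ _).
  have := @is_deriveB C C^o C^o (cst (1 : C^o)) (a^* \*: id) z 1 0 (a^* *: 1)
    (is_derive_cst _ _ _) hz.
  by rewrite sub0r /GRing.scale /= mulr1.
have h3 : is_derive (z : C^o) (1 : C^o) (fun x : C^o => (1 - a^* * x)^-1)
                    (- (1 - a^* * z)^-2 *: - a^*).
  by apply: DeriveDef; [exact: derivableV | rewrite deriveV // derive_val].
apply: is_derive_eq; rewrite /GRing.scale /=.
by field.
Qed.

Section Midpoint.
Variables u w : C.
Hypotheses (hu : cabs u < 1) (hw : cabs w < 1).

Let g := mid_gamma u u^* w w^*.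
Let P := 1 - cabs u ^+ 2 * cabs w ^+ 2.
Let G := cabs g ^+ 2.

Lemma mid_gammaJ : g^* = mid_gamma u^* u w^* w.
Proof. by rewrite /g /mid_gamma !(conjCD, conjCN, conjCM, conjCK). Qed.

Lemma mid_discriminantE :
  P ^+ 2 - G = (1 - cabs u ^+ 2) * (1 - cabs w ^+ 2) * cabs (1 - u^* * w) ^+ 2.
Proof.
apply: complexI; rewrite /P /G /g /mid_gamma.
rewrite !(real_complexB, real_complexD, cabs_sqr, real_complexX, real_complexM).
by rewrite !(conjCM, conjCB, conjCD, conjCN, conjC1, conjCK); ring.
Qed.

Lemma mid_discriminant_gt0 : 0 < P ^+ 2 - G.
Proof.
rewrite mid_discriminantE; have := cabs_ge0 u; have := cabs_ge0 w => w0 u0.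
apply: mulr_gt0; first by apply: mulr_gt0; rewrite subr_gt0 expr_lt1.
by rewrite exprn_gt0 // cabs_gt0 // disk_denom_neq0.
Qed.

Let k := (P + Num.sqrt (P ^+ 2 - G))^-1.

Lemma mid_root_gt0 : 0 < k.
Proof.
have P0 : 0 < P.
  have := cabs_ge0 u; have := cabs_ge0 w => w0 u0.
  have : cabs u ^+ 2 < 1 by rewrite expr_lt1.
  have : cabs w ^+ 2 < 1 by rewrite expr_lt1.
  by rewrite /P; nra.
by rewrite invr_gt0 addr_gt0 // sqrtr_gt0 mid_discriminant_gt0.
Qed.

Lemma mid_root_real : G * k ^+ 2 - 2 * P * k + 1 = 0.
Proof.
have -> : G = P ^+ 2 - Num.sqrt (P ^+ 2 - G) ^+ 2.
  by rewrite sqr_sqrtr ?(ltW mid_discriminant_gt0) // opprB addrC subrK.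
have hn : P + Num.sqrt (P ^+ 2 - G) != 0 by rewrite -invr_eq0 gt_eqF ?mid_root_gt0.
by rewrite /k; field.
Qed.

Lemma mid_root : mid_quadratic u u^* w w^* k%:C = 0.
Proof.
have := congr1 (real_complex R) mid_root_real.
rewrite /G /P !(real_complexB, real_complexD, cabs_sqr, real_complexX, real_complexM).
by rewrite mid_gammaJ /mid_quadratic -/g => E; rewrite -[RHS]E; ring.
Qed.

Definition hmid := - g * k%:C.

Lemma hmidJ : hmid^* = - mid_gamma u^* u w^* w * k%:C.
Proof. by rewrite /hmid conjCM conjCN mid_gammaJ; congr (_ * _); exact: conjc_real. Qed.

Lemma cabs_hmid_lt1 : cabs hmid < 1.
Proof.
have kp := mid_root_gt0.
have ck : cabs hmid = cabs g * k by rewrite /hmid cabsM cabsN cabs_real // ltW.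
rewrite -cabs_sqr_lt1 expr2 cabsM -expr2 ck exprMn -/G.
have -> : G * k ^+ 2 = 2 * P * k - 1.
  by apply/eqP; rewrite -subr_eq0 -mid_root_real; apply/eqP; ring.
suff : P * k < 1 by lra.
have : 0 < P + Num.sqrt (P ^+ 2 - G) by rewrite -invr_gt0.
move=> /ltr_pdivrMr ->; rewrite mul1r ltrDl sqrtr_gt0.
exact: mid_discriminant_gt0.
Qed.

Let hc := cabs_hmid_lt1.

Lemma blaschke_hmid_opp : bf hmid w = - bf hmid u.
Proof.
have E := mid_quadratic_opp u u^* w w^* k%:C.
rewrite /= mid_root mulr0 -hmidJ -/g -/hmid in E.
have h1 := disk_denom_neq0 hc hw; have h2 := disk_denom_neq0 hc hu.
apply/eqP; rewrite -subr_eq0 opprK /blaschke_factor.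
have -> : (w - hmid) / (1 - hmid^* * w) + (u - hmid) / (1 - hmid^* * u) =
  ((w - hmid) * (1 - hmid^* * u) + (u - hmid) * (1 - hmid^* * w)) /
  ((1 - hmid^* * w) * (1 - hmid^* * u)) by field; rewrite h1 h2.
by rewrite E mul0r.
Qed.

Definition blaschke2 z := bf w z * bf u z.

Lemma is_derive_blaschke2 z : cabs z < 1 ->
  is_derive (z : C^o) (1 : C^o) (blaschke2 : C^o -> C^o)
    (crit_poly u u^* w w^* z / ((1 - w^* * z) ^+ 2 * (1 - u^* * z) ^+ 2)).
Proof.
move=> hz; have n1 := disk_denom_neq0 hw hz; have n2 := disk_denom_neq0 hu hz.
have := is_deriveM (is_derive_blaschke_factor n1) (is_derive_blaschke_factor n2).
by rewrite /GRing.scale /= !blaschke_factorE mobius_product_rule.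
Qed.

Lemma crit_poly_hmid z :
  (z - hmid) * (1 - hmid^* * z) = k%:C * crit_poly u u^* w w^* z.
Proof.
apply/eqP; rewrite -subr_eq0; apply/eqP.
by have := mid_quadratic_crit u u^* w w^* k%:C z; rewrite /= mid_root mulr0 -hmidJ.
Qed.

Lemma cderive_blaschke2_eq0 z : cabs z < 1 ->
  (cderive blaschke2 z == 0) = (z == hmid).
Proof.
move=> hz; have n1 := disk_denom_neq0 hw hz; have n2 := disk_denom_neq0 hu hz.
have kn : k%:C != 0 :> C by rewrite (inj_eq (@complexI R)) gt_eqF // mid_root_gt0.
rewrite /cderive derive1E (@derive_val _ _ _ _ _ _ _ (is_derive_blaschke2 hz)).
rewrite mulf_eq0 invr_eq0 mulf_eq0 !expf_eq0 /= (negbTE n1) (negbTE n2) orbF.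
rewrite -(mulrI_eq0 _ (mulfI kn)) -crit_poly_hmid mulf_eq0 subr_eq0.
by rewrite (negbTE (disk_denom_neq0 hc hz)) !orbF.
Qed.

Let s := bf hmid u.
Let twist a := (1 - hmid^* * a) / (1 - hmid * a^*).

Lemma blaschke_factor_recenter a z : cabs a < 1 -> cabs z < 1 ->
  bf a z = twist a * bf (bf hmid a) (bf hmid z).
Proof.
move=> ha hz; rewrite blaschke_factorE (mobius_recenter (c := hmid) (c' := hmid^*)).
- by rewrite [bf (bf _ _) _]blaschke_factorE blaschke_factorJ.
- exact: disk_denom_neq0.
- exact: disk_denom_neq0.
- by rewrite mulrC disk_denom_neq0.
- by rewrite mulrC disk_denom_neq0.
- exact: disk_denom_neq0.
Qed.

Lemma cabs_twist a : cabs a < 1 -> cabs (twist a) = 1.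
Proof.
move=> ha; rewrite /twist.
have -> : 1 - hmid * a^* = (1 - hmid^* * a)^* by rewrite !(conjCB, conjCM, conjC1, conjCK).
by rewrite cabs_divJ // disk_denom_neq0.
Qed.

Definition blaschke2_rotation := twist w * twist u.

Lemma cabs_blaschke2_rotation : cabs blaschke2_rotation = 1.
Proof. by rewrite cabsM !cabs_twist // mul1r. Qed.

Lemma blaschke2_rotation_neq0 : blaschke2_rotation != 0.
Proof.
apply: contra_eq_neq cabs_blaschke2_rotation => ->.
by rewrite /cabs /= expr0n /= addr0 sqrtr0 eq_sym oner_neq0.
Qed.

Let hs : cabs s < 1 := cabs_blaschke_lt1 hc hu.

Lemma blaschke2_factor z : cabs z < 1 ->
  blaschke2 z = blaschke2_rotation * bf (s ^+ 2) (bf hmid z ^+ 2).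
Proof.
move=> hz; rewrite /blaschke2 (blaschke_factor_recenter hw hz) (blaschke_factor_recenter hu hz).
rewrite blaschke_hmid_opp -/s.
have ht := cabs_blaschke_lt1 hc hz.
have n1 := disk_denom_neq0 hs ht.
have n2 : 1 - - s^* * bf hmid z != 0 by rewrite -conjCN disk_denom_neq0 ?cabsN.
have := mobiusN_mul s n1 n2; rewrite -conjCN -conjCX -!blaschke_factorE.
by rewrite /blaschke2_rotation => <-; ring.
Qed.

Lemma hmid_midpoint : hyp_midpoint u w hmid.
Proof.
have r1 : pseudo_hyp u hmid = cabs s by [].
have r2 : pseudo_hyp hmid w = cabs s.
  by rewrite /pseudo_hyp -/(bf w hmid) cabs_blaschke_sym blaschke_hmid_opp cabsN.
have r3 : pseudo_hyp u w = 2 * cabs s / (1 + cabs s ^+ 2).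
  rewrite /pseudo_hyp -/(bf w u) (blaschke_factor_recenter hw hu) cabsM cabs_twist //.
  rewrite mul1r blaschke_hmid_opp -/s blaschke_factorE conjCN mobiusN_self; last first.
    by rewrite -conjCN disk_denom_neq0 ?cabsN.
  have -> : 1 + s^* * s = (1 + cabs s ^+ 2)%:C by rewrite real_complexD cabs_sqr mulrC.
  have -> : 2 = (2 : R)%:C by rewrite real_complex_nat.
  by rewrite !cabsM !cabsV cabs_real // cabs_real // addr_ge0 ?sqr_ge0.
split; first exact: mem_set.
rewrite /hdist r1 r2 r3; split=> //.
by apply: ln_ratio_double; [exact: cabs_ge0 | exact: hs].
Qed.

(* [sheet id] and [sheet -%R] pull back by phi_c the two images of the branch
   [sqrtc] of the square root: on each, [bf hmid z] is recovered from its square. *)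
Definition sheet (e : C -> C) :=
  [set z : C | cabs z < 1 /\ bf hmid z = e (sqrtc (bf hmid z ^+ 2))].

Lemma sheet_bij (e : C -> C) : (forall x, e x ^+ 2 = x ^+ 2) ->
  set_bij (sheet e) (unit_disk R) blaschke2.
Proof.
move=> he; have hs2 : cabs (s ^+ 2) < 1 by rewrite cabs_sqr_lt1 hs.
split.
- move=> z [hz _]; rewrite /unit_disk /= /blaschke2.
  by apply: cabsM_lt1; apply: cabs_blaschke_lt1.
- move=> z1 z2 /set_mem [h1 e1] /set_mem [h2 e2].
  rewrite !blaschke2_factor // => /(mulfI blaschke2_rotation_neq0).
  move/blaschke_factor_inj => /(_ hs2); rewrite !cabs_sqr_lt1 !cabs_blaschke_lt1 //.
  move=> /(_ isT isT) E; apply: (blaschke_factor_inj hc h1 h2).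
  by rewrite e1 e2 E.
- move=> y hy; set y' := y / blaschke2_rotation.
  have hy' : cabs y' < 1 by rewrite cabsM cabsV cabs_blaschke2_rotation invr1 mulr1.
  set v := bf (- s ^+ 2) y'.
  have hv : cabs v < 1 by rewrite cabs_blaschke_lt1 ?cabsN.
  set t := e (sqrtc v).
  have t2 : t ^+ 2 = v by rewrite /t he sqr_sqrtc.
  have ht : cabs t < 1 by rewrite -cabs_sqr_lt1 t2.
  have hz : cabs (bf (- hmid) t) < 1 by rewrite cabs_blaschke_lt1 ?cabsN.
  exists (bf (- hmid) t); first by split; rewrite // blaschke_factorK // t2.
  rewrite blaschke2_factor // blaschke_factorK // t2 blaschke_factorK //.
  by rewrite mulrC divfK // blaschke2_rotation_neq0.
Qed.

Lemma sheet_setU : sheet id `|` sheet -%R = unit_disk R.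
Proof.
apply/seteqP; split=> z; first by case=> -[].
move=> hz; set t := bf hmid z; set r := sqrtc (t ^+ 2).
have : (t - r) * (t + r) = 0.
  by rewrite -subr_sqr /r sqr_sqrtc subrr.
move/eqP; rewrite mulf_eq0 subr_eq0 addr_eq0 => /orP[] /eqP et.
- by left.
- by right.
Qed.

Lemma sheet_setI : sheet id `&` sheet -%R = [set hmid].
Proof.
have h0 : bf hmid hmid = 0 by rewrite /blaschke_factor subrr mul0r.
apply/seteqP; split=> z; last first.
  by move=> ->; split; split=> //; rewrite h0 expr2 mulr0 sqrtc0 ?oppr0.
move=> [[hz e1] [_ e2]].
have : bf hmid z = - bf hmid z by rewrite {1}e1 [in RHS]e2 opprK.
move/eqP; rewrite -subr_eq0 opprK -mulr2n -mulr_natr mulf_eq0 pnatr_eq0 orbF.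
by rewrite -h0 => /eqP /(blaschke_factor_inj hc hz hc).
Qed.

End Midpoint.
End DiskGeometry.

Theorem theorem3p1 (R : realType) (u w : R[i]) :
  u \in unit_disk R -> w \in unit_disk R ->
  let B := fun z : R[i] => blaschke_factor w z * blaschke_factor u z in
  exists c : R[i],
    (c \in unit_disk R /\ cderivable B c /\ cderive B c = 0 /\
     (forall z, z \in unit_disk R -> cderive B z = 0 -> z = c)) /\
    hyp_midpoint u w c /\
    exists D1 D2 : set R[i],
      D1 `|` D2 = unit_disk R /\ D1 `&` D2 = [set c] /\
      set_bij D1 (unit_disk R) B /\ set_bij D2 (unit_disk R) B.
Proof.
move=> /set_mem hu /set_mem hw B; exists (hmid u w).
have hc := cabs_hmid_lt1 hu hw.
split; [split; [|split; [|split]] | split].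
- exact: mem_set.
- by case: (is_derive_blaschke2 hu hw hc).
- by apply/eqP; rewrite (cderive_blaschke2_eq0 hu hw hc).
- by move=> z /set_mem hz /eqP; rewrite (cderive_blaschke2_eq0 hu hw hz) => /eqP.
- exact: hmid_midpoint.
- exists (sheet u w id), (sheet u w -%R).
  split; first exact: sheet_setU.
  split; first exact: sheet_setI.
  by split; apply: sheet_bij => // x; rewrite ?sqrrN.
Qed.
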